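(* Every GSWNC ring $R$ is Dedekind-finite, i.e., whenever $a,b \in R$ satisfy $ab = 1$, then $ba = 1$.
   Context: All rings are associative with identity. An element $a$ of a ring is strongly weakly nil-clean if there exist an idempotent $e$ and a nilpotent $q$ with $eq = qe$ such that $a = q + e$ or $a = q - e$. A ring is GSWNC if every non-invertible element is strongly weakly nil-clean. *)

From HB Require Import structures.
From mathcomp Require Import all_boot all_order all_algebra.
Set Implicit Arguments. Unset Strict Implicit. Unset Printing Implicit Defensive.
Import GRing.Theory.
Local Open Scope ring_scope.

Definition idempotent_el (R : ringType) (e : R) : Prop := e * e = e.
Definition nilpotent_el (R : ringType) (q : R) : Prop := exists n : nat, q ^+ n = 0.

Definition strongly_weakly_nil_clean (R : ringType) (a : R) : Prop :=
  exists e q : R, idempotent_el e /\ nilpotent_el q /\ e * q = q * e /\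
    (a = q + e \/ a = q - e).

Definition GSWNC (R : unitRingType) : Prop :=
  forall a : R, ~~ (a \is a GRing.unit) -> strongly_weakly_nil_clean a.

From HB Require Import structures.
From mathcomp Require Import all_boot all_order all_algebra.
Set Implicit Arguments. Unset Strict Implicit. Unset Printing Implicit Defensive.
Local Open Scope ring_scope.
Import GRing.Theory.

(* If [a * b = 1] and [b = q +- e] is a strongly weakly nil-clean decomposition,
   then [b ^+ n * (1 - e) = q ^+ n * (1 - e) = 0] for [q ^+ n = 0]; cancelling
   [b ^+ n] on the left with [a ^+ n] forces [e = 1].  Hence [b] is a nilpotent
   plus or minus [1], a unit.  So in a GSWNC ring a one-sided inverse [b] of [a]
   cannot be a non-unit, and [a = b^-1]. *)

Section RingLemmas.

Variable R : nzRingType.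
Implicit Types a b q e x y f : R.

Lemma mulr_expr_eq1 a b : a * b = 1 -> forall n, a ^+ n * b ^+ n = 1.
Proof.
move=> ab; elim => [|n IHn]; first by rewrite !expr0 mulr1.
by rewrite exprSr exprS mulrA -(mulrA _ a) ab mulr1 IHn.
Qed.

Lemma exprMr_eq x y f :
  GRing.comm y f -> x * f = y * f -> forall n, x ^+ n * f = y ^+ n * f.
Proof.
move=> cyf xfE; elim => [|n IHn]; first by rewrite !expr0.
by rewrite exprSr -mulrA xfE cyf mulrA IHn -mulrA -cyf mulrA -exprSr.
Qed.

Lemma nilpotentN q : nilpotent_el q -> nilpotent_el (- q).
Proof. by case=> n qn; exists n; rewrite exprNn qn mulr0. Qed.

Lemma left_invertible_swnc_idem_eq1 a b e q :
  a * b = 1 -> idempotent_el e -> nilpotent_el q -> e * q = q * e ->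
  (b = q + e \/ b = q - e) -> e = 1.
Proof.
move=> ab ee [n qn] ceq bE.
pose f : R := 1 - e.
have ef0 : e * f = 0 by rewrite mulrBr mulr1 ee subrr.
have cqf : GRing.comm q f by rewrite /GRing.comm mulrBl mulrBr mul1r mulr1 ceq.
have bfE : b * f = q * f by case: bE => ->; rewrite mulrDl ?mulNr ef0 ?oppr0 addr0.
have f0 : f = 0.
  by rewrite -[f]mul1r -(mulr_expr_eq1 ab n) -mulrA (exprMr_eq cqf bfE n) qn !mul0r mulr0.
by apply/eqP; rewrite eq_sym -subr_eq0 -/f f0.
Qed.

End RingLemmas.

Section UnitRingLemmas.

Variable R : unitRingType.
Implicit Types a b q : R.

Lemma nilpotent_subr1_unit q : nilpotent_el q -> q - 1 \is a GRing.unit.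
Proof.
case=> n qn; pose s := \sum_(i < n) q ^+ i.
have rinv : (q - 1) * - s = 1 by rewrite mulrN -subrX1 qn sub0r opprK.
have cqs : GRing.comm (q - 1) s.
  by apply: commr_sum => i _; apply/commrX/commr_sym/commrB; [exact: commr_refl | exact: commr1].
by apply/unitrP; exists (- s); rewrite mulNr -cqs -mulrN rinv.
Qed.

Lemma nilpotent_addr1_unit q : nilpotent_el q -> q + 1 \is a GRing.unit.
Proof.
by move/nilpotentN/nilpotent_subr1_unit; rewrite -unitrN opprB opprK addrC.
Qed.

Lemma swnc_left_invertible_unit a b :
  a * b = 1 -> strongly_weakly_nil_clean b -> b \is a GRing.unit.
Proof.
move=> ab [e [q [ee [nq [ceq bE]]]]].
have e1 := left_invertible_swnc_idem_eq1 ab ee nq ceq bE.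
by case: bE => ->; rewrite e1; [exact: nilpotent_addr1_unit | exact: nilpotent_subr1_unit].
Qed.

End UnitRingLemmas.

Theorem corollary2p36 (R : unitRingType) :
  GSWNC R -> forall a b : R, a * b = 1 -> b * a = 1.
Proof.
move=> gswnc a b ab.
have bU : b \is a GRing.unit.
  have [//|bNU] := boolP (b \is a GRing.unit).
  by rewrite -(negbTE bNU) (swnc_left_invertible_unit ab (gswnc b bNU)).
by rewrite -(mulrK bU a) ab mul1r divrr.
Qed.
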